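(* Let $\mathbb{P}_w$ be a distribution on $\mathbb{R}$ that is symmetric around zero, let $\boldsymbol{U}\in\mathbb{R}^{n\times n}$ be positive semi-definite, and let $\boldsymbol{w}=(w_1,\ldots,w_n)^\top$ have i.i.d. entries from $\mathbb{P}_w$. Then for any $\delta>0$, $$\mathbb{P}\bigl(\boldsymbol{w}^\top\boldsymbol{U}\boldsymbol{w}>\delta\|\boldsymbol{w}\|_2^2\bigr)\le\frac{\mathrm{tr}[\boldsymbol{U}]}{\delta n}.$$ *)

From HB Require Import structures.
From mathcomp Require Import all_boot all_order all_algebra.
From mathcomp Require Import all_classical all_reals all_analysis.
Set Implicit Arguments. Unset Strict Implicit. Unset Printing Implicit Defensive.
Import Order.TTheory GRing.Theory Num.Theory.
Local Open Scope classical_set_scope.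
Local Open Scope ring_scope.

Definition psd (R : realType) (n : nat) (U : 'M[R]_n) : Prop :=
  U^T = U /\ forall x : 'cV[R]_n, 0 <= (x^T *m U *m x) 0 0.

Definition symmetric_distr (R : realType) (Pw : probability R R) : Prop :=
  forall A : set R, measurable A -> Pw A = Pw [set - x | x in A].

(* Mutual independence of the random variables w_0,...,w_{n-1}: product rule
   for preimages of Borel sets (taking A i = setT gives every subfamily). *)
Definition mutually_independent d (T : measurableType d) (R : realType)
  (P : probability T R) (n : nat) (w : 'I_n -> T -> R) : Prop :=
  forall A : 'I_n -> set R, (forall i, measurable (A i)) ->
    P (\bigcap_(i in [set: 'I_n]) (w i @^-1` A i)) =
    (\prod_(i < n) P (w i @^-1` A i))%E.

Definition has_law d (T : measurableType d) (R : realType)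
  (P : probability T R) (X : T -> R) (Pw : probability R R) : Prop :=
  forall A : set R, measurable A -> P (X @^-1` A) = Pw A.

Definition rvec d (T : measurableType d) (R : realType) (n : nat)
  (w : 'I_n -> T -> R) (t : T) : 'cV[R]_n := \col_i w i t.

From HB Require Import structures.
From mathcomp Require Import all_boot all_order all_algebra.
From mathcomp Require Import all_classical all_reals all_analysis.
From mathcomp Require Import fingroup perm measurable_realfun lra.
Set Implicit Arguments. Unset Strict Implicit. Unset Printing Implicit Defensive.
Import Order.TTheory GRing.Theory Num.Theory.
Local Open Scope classical_set_scope.
Local Open Scope ring_scope.

(* Let rho(x) = x^T U x / |x|^2 (with rho(0) = 0). The event is {delta < rho(w)},
   so Markov's inequality bounds its probability by E[rho(w)] / delta, and
   E[rho(w)] = sum_ij U_ij E[w_i w_j / |w|^2]. The joint law of an i.i.d. vector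
   with symmetric entries is invariant under permuting the coordinates and
   flipping their signs: flipping w_i shows that the off-diagonal expectations
   vanish, and permuting shows that the diagonal ones share a common value c,
   with n c = E[sum_i w_i^2 / |w|^2] <= 1. Since U_ii >= 0, this gives
   E[rho(w)] <= tr U / n. *)

Section boxes.
Context d (T : measurableType d) (n : nat).

Definition box (A : 'I_n -> set T) : set (n.-tuple T) :=
  [set x | forall i, A i (tnth x i)].

Definition boxes : set (set (n.-tuple T)) :=
  [set box A | A in [set A | forall i, measurable (A i)]].

Lemma box_bigcap (A : 'I_n -> set T) :
  box A = \bigcap_(i in [set: 'I_n]) ((@tnth n T)^~ i @^-1` A i).
Proof. by apply/seteqP; split => [x Ax i _|x Ax i]; apply: Ax. Qed.

Lemma measurable_box (A : 'I_n -> set T) :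
  (forall i, measurable (A i)) -> measurable (box A).
Proof.
move=> mA; rewrite box_bigcap; apply: fin_bigcap_measurable => // i _.
by rewrite -[X in measurable X]setTI; apply: measurable_tnth.
Qed.

Lemma setI_closed_boxes : setI_closed boxes.
Proof.
move=> _ _ [A mA <-] [B mB <-]; exists (fun i => A i `&` B i).
  by move=> i; apply: measurableI.
by apply/seteqP; split => [x ABx|x [Ax Bx] i]; [split => i; case: (ABx i)|].
Qed.

Lemma measurable_tupleE : measurable = <<s boxes >>.
Proof.
apply/seteqP; split; last first.
  apply: smallest_sub; first exact: sigma_algebra_measurable.
  by move=> _ [A mA <-]; apply: measurable_box.
apply: smallest_sub; first exact: smallest_sigma_algebra.
rewrite -bigcup_seq => _ [i _ [A mA <-]].
apply: sub_sigma_algebra; exists (fun j => if j == i then A else setT).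
  by move=> j; case: ifP.
rewrite setTI; apply/seteqP; split => [x /= Ax|x /= Ax j].
  by have := Ax i; rewrite eqxx.
by case: eqP => // ->.
Qed.

End boxes.
Arguments boxes {d} T n.

Section integration.
Context d (Omega : measurableType d) (R : realType).
Context (mu : {measure set Omega -> \bar R}).

Lemma integrable_Rsum (I : Type) (s : seq I) (f : I -> Omega -> R)
    (D : set Omega) :
  measurable D -> (forall i, mu.-integrable D (EFin \o f i)) ->
  mu.-integrable D (EFin \o (fun x => \sum_(i <- s) f i x)).
Proof.
move=> mD intf; rewrite (_ : _ \o _ = fun x => \sum_(i <- s) (f i x)%:E).
  by apply: integrable_sum => // i _; apply: intf.
by apply/funext => x; rewrite /= sumEFin.
Qed.

Lemma Rintegral_sum (I : Type) (s : seq I) (f : I -> Omega -> R) (D : set Omega) :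
  measurable D -> (forall i, mu.-integrable D (EFin \o f i)) ->
  \int[mu]_(x in D) \sum_(i <- s) f i x = \sum_(i <- s) \int[mu]_(x in D) f i x.
Proof.
move=> mD intf; elim: s => [|i s IH].
  under eq_Rintegral do rewrite big_nil.
  by rewrite Rintegral_cst // mul0r big_nil.
under eq_Rintegral do rewrite big_cons.
by rewrite RintegralD ?IH ?big_cons //; apply: integrable_Rsum.
Qed.

Lemma Rintegral_sumZ (I : Type) (s : seq I) (c : I -> R) (f : I -> Omega -> R)
    (D : set Omega) :
  measurable D -> (forall i, mu.-integrable D (EFin \o f i)) ->
  \int[mu]_(x in D) \sum_(i <- s) c i * f i x =
  \sum_(i <- s) c i * \int[mu]_(x in D) f i x.
Proof.
move=> mD intf; rewrite Rintegral_sum //.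
  by apply: eq_bigr => i _; rewrite RintegralZl.
move=> i; rewrite (_ : _ \o _ = fun x => (c i)%:E * (f i x)%:E)%E.
  by apply: integrableZl => //; apply: intf.
by apply/funext => x; rewrite /= EFinM.
Qed.

Lemma markov_lt (f : Omega -> R) (a : R) :
  0 < a -> mu.-integrable setT (EFin \o f) -> (forall t, 0 <= f t) ->
  (a%:E * mu [set t | (a < f t)%R] <= (\int[mu]_t f t)%R%:E)%E.
Proof.
move=> a_gt0 intf f_ge0; have /integrableP[mEf _] := intf.
have /measurable_EFinP mf := mEf.
have markov := le_integral_comp_abse mu measurableT (f := id)
  (@measurable_id _ _ _) _ _ mEf a_gt0.
rewrite /Rintegral fineK; last by apply: integrable_fin_num.
have -> : (\int[mu]_t (f t)%:E = \int[mu]_(t in setT) id `|(EFin \o f) t|)%E.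
  by apply: eq_integral => t _; rewrite /= ger0_norm.
apply: le_trans (markov _ _) => //; rewrite lee_wpmul2l ?lee_fin ?(ltW a_gt0) //.
apply: le_measure.
- by rewrite in_setE -[X in measurable X]setTI -preimage_itvoy; apply: mf.
- rewrite in_setE; apply: emeasurable_fun_c_infty => //.
  exact: measurableT_comp.
- by move=> t /= /ltW fa; split => //=; rewrite ger0_norm ?lee_fin.
Qed.

End integration.

Section law_on_boxes.
Context d (Omega : measurableType d) (R : realType) (P : probability Omega R).

Lemma integrable_bounded_comp d' (T : measurableType d') (Z : Omega -> T)
    (g : T -> R) :
  measurable_fun setT Z -> measurable_fun setT g -> [bounded g x | x in setT] ->
  P.-integrable setT (EFin \o (g \o Z)).
Proof.
move=> mZ mg [M [Mreal gM]]; apply: measurable_bounded_integrable => //.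
- by rewrite (le_lt_trans (probability_le1 _ _)) ?ltry.
- exact: measurableT_comp.
- by exists M; split => // N MN t _; apply: gM.
Qed.

Context (n : nat).

Lemma distribution_eq_on_boxes (X Y : {RV P >-> n.-tuple R}) :
  (forall A, (forall i, measurable (A i)) ->
     P (X @^-1` box A) = P (Y @^-1` box A)) ->
  forall B, measurable B -> distribution P X B = distribution P Y B.
Proof.
move=> XY B mB; have boxT : box (fun _ : 'I_n => [set: R]) = setT.
  by apply/seteqP; split.
apply: (measure_unique (boxes R n) (fun=> setT)) => //.
- exact: measurable_tupleE.
- exact: setI_closed_boxes.
- by move=> _; rewrite -boxT; exists (fun=> setT).
- by rewrite bigcup_const.
- by move=> _ [A mA <-]; apply: XY.
- by move=> _; rewrite (le_lt_trans (probability_le1 _ _)) ?ltry.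
Qed.

Lemma integral_eq_on_boxes (X Y : Omega -> n.-tuple R) (g : n.-tuple R -> R) :
  measurable_fun setT X -> measurable_fun setT Y ->
  (forall A, (forall i, measurable (A i)) ->
     P (X @^-1` box A) = P (Y @^-1` box A)) ->
  measurable_fun setT g -> [bounded g x | x in setT] ->
  (\int[P]_t (g (X t))%:E = \int[P]_t (g (Y t))%:E)%E.
Proof.
move=> /mem_set mX /mem_set mY XY mg bg; have /measurable_EFinP mEg := mg.
have intg (Z : {RV P >-> n.-tuple R}) : P.-integrable setT (EFin \o (g \o Z)).
  exact: integrable_bounded_comp.
change (\int[P]_t (g (mfun_Sub mX t))%:E = \int[P]_t (g (mfun_Sub mY t))%:E)%E.
transitivity (\int[distribution P (mfun_Sub mX)]_y (g y)%:E)%E.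
  by rewrite integral_distribution //; apply: intg.
transitivity (\int[distribution P (mfun_Sub mY)]_y (g y)%:E)%E.
  by apply: eq_measure_integral => B mB _; apply: distribution_eq_on_boxes.
by rewrite integral_distribution //; apply: intg.
Qed.

End law_on_boxes.

Section tuple_rv.
Context d (Omega : measurableType d) d' (T : measurableType d') (n : nat).

(* The random vector is modelled as a tuple, which the library equips with the
   product sigma-algebra (column vectors carry no measurable structure). *)
Definition tuple_rv (X : 'I_n -> Omega -> T) (t : Omega) : n.-tuple T :=
  [tuple X i t | i < n].

Lemma tuple_rv_preimage_box (X : 'I_n -> Omega -> T) (A : 'I_n -> set T) :
  tuple_rv X @^-1` box A = \bigcap_(i in [set: 'I_n]) (X i @^-1` A i).
Proof.
apply/seteqP; split => [t XA i _|t XA i];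
  by have := XA i; rewrite /= tnth_mktuple; apply.
Qed.

Lemma measurable_tuple_rv (X : 'I_n -> Omega -> T) :
  (forall i, measurable_fun setT (X i)) -> measurable_fun setT (tuple_rv X).
Proof.
move=> mX; apply/measurable_fun_tnthP => i.
by rewrite (_ : _ \o _ = X i) //; apply/funext => t; rewrite /= tnth_mktuple.
Qed.

End tuple_rv.

Section sign_perm.
Context (R : realType) (n : nat).

Definition sign_perm (e : 'I_n -> R) (p : {perm 'I_n}) (x : n.-tuple R) :
  n.-tuple R := [tuple e i * tnth x (p i) | i < n].

Lemma measurable_sign_perm e p : measurable_fun setT (sign_perm e p).
Proof.
apply/measurable_fun_tnthP => i.
rewrite (_ : _ \o _ = fun x => e i * tnth x (p i)).
  by apply: measurable_funM => //; apply: measurable_tnth.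
by apply/funext => x; rewrite /= tnth_mktuple.
Qed.

Lemma sign_perm_preimage_box e p (A : 'I_n -> set R) :
  sign_perm e p @^-1` box A =
  box (fun j => [set y | A ((p^-1)%g j) (e ((p^-1)%g j) * y)]).
Proof.
apply/seteqP; split => x /= Ax i.
  by have := Ax ((p^-1)%g i); rewrite tnth_mktuple permKV.
by have := Ax (p i); rewrite tnth_mktuple permK.
Qed.

End sign_perm.

Lemma measurable_invr (R : realType) : measurable_fun [set: R] GRing.inv.
Proof.
rewrite -(setvU [set 0]); apply/measurable_funU => //; first exact: measurableC.
split; last exact: measurable_fun_set1.
apply: open_continuous_measurable_fun.
  exact/closed_openC/accessible_closed_set1/hausdorff_accessible/Rhausdorff.
by move=> x /set_mem /eqP x0; apply: inv_continuous.
Qed.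

Section proj_entry.
Context (R : realType) (n : nat).
Implicit Types x : n.-tuple R.

Definition sqnorm x : R := \sum_i tnth x i ^+ 2.

(* Entry (i, j) of the orthogonal projection onto x, i.e. x_i x_j / |x|^2;
   it is 0 when x = 0 since division by 0 returns 0. *)
Definition proj_entry (i j : 'I_n) x : R := tnth x i * tnth x j / sqnorm x.

Lemma sqnorm_ge0 x : 0 <= sqnorm x.
Proof. by apply: sumr_ge0 => i _; apply: sqr_ge0. Qed.

Lemma sqr_le_sqnorm x i : tnth x i ^+ 2 <= sqnorm x.
Proof.
by rewrite /sqnorm (bigD1 i) //= lerDl sumr_ge0 // => j _; apply: sqr_ge0.
Qed.

Lemma sqnorm_eq0 x i : sqnorm x = 0 -> tnth x i = 0.
Proof.
by move=> s0; apply/eqP; rewrite -sqrf_eq0 eq_le sqr_ge0 andbT -s0 sqr_le_sqnorm.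
Qed.

Lemma measurable_sqnorm : measurable_fun setT sqnorm.
Proof.
by apply: measurable_sum => i; apply: measurable_funX; apply: measurable_tnth.
Qed.

Lemma sqnorm_sign_perm (e : 'I_n -> R) (p : {perm 'I_n}) x :
  (forall i, e i = 1 \/ e i = -1) -> sqnorm (sign_perm e p x) = sqnorm x.
Proof.
move=> e_sign; rewrite /sqnorm (reindex_inj (@perm_inj _ p^-1)%g) /=.
apply: eq_bigr => i _; rewrite tnth_mktuple permKV exprMn.
by case: (e_sign ((p^-1)%g i)) => ->; rewrite ?sqrrN expr1n mul1r.
Qed.

Lemma proj_entry_sign_perm (e : 'I_n -> R) (p : {perm 'I_n}) i j x :
  (forall i, e i = 1 \/ e i = -1) ->
  proj_entry i j (sign_perm e p x) = e i * e j * proj_entry (p i) (p j) x.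
Proof.
move=> e_sign; rewrite /proj_entry sqnorm_sign_perm // !tnth_mktuple.
by rewrite mulrACA !mulrA.
Qed.

Lemma measurable_proj_entry i j : measurable_fun setT (proj_entry i j).
Proof.
apply: measurable_funM; first by apply: measurable_funM; apply: measurable_tnth.
apply: measurableT_comp; [exact: measurable_invr|exact: measurable_sqnorm].
Qed.

Lemma proj_entry_le1 i j x : `|proj_entry i j x| <= 1.
Proof.
have [s0|s_neq0] := eqVneq (sqnorm x) 0.
  by rewrite /proj_entry s0 invr0 mulr0 normr0.
have s_gt0 : 0 < sqnorm x by rewrite lt_def s_neq0 sqnorm_ge0.
rewrite /proj_entry normrM normfV (gtr0_norm s_gt0) ler_pdivrMr // mul1r normrM.
have := sqr_le_sqnorm x i; have := sqr_le_sqnorm x j.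
rewrite -[tnth x i ^+ 2]real_normK ?num_real //.
rewrite -[tnth x j ^+ 2]real_normK ?num_real //.
have := normr_ge0 (tnth x i); have := normr_ge0 (tnth x j); nra.
Qed.

Lemma bounded_proj_entry i j : [bounded proj_entry i j x | x in setT].
Proof.
exists 1; split => // M M1 x _.
exact: le_trans (proj_entry_le1 _ _ _) (ltW M1).
Qed.

Lemma sum_proj_entry_le1 x : \sum_i proj_entry i i x <= 1.
Proof.
rewrite /proj_entry; under eq_bigr do rewrite -expr2.
rewrite -mulr_suml -/(sqnorm x).
by have [->|s0] := eqVneq (sqnorm x) 0; rewrite ?mul0r // divff.
Qed.

End proj_entry.

Lemma mxquadE (R : comPzRingType) n (U : 'M[R]_n) (v : 'cV[R]_n) :
  (v^T *m U *m v) 0 0 = \sum_i \sum_j U i j * (v i 0 * v j 0).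
Proof.
rewrite mxE; under eq_bigr => j _ do rewrite mxE big_distrl.
rewrite exchange_big; apply: eq_bigr => i _; apply: eq_bigr => j _.
by rewrite !mxE mulrCA mulrA.
Qed.

Lemma psd_diag_ge0 (R : realType) n (U : 'M[R]_n) i : psd U -> 0 <= U i i.
Proof.
move=> [_ U_ge0]; have := U_ge0 (delta_mx i 0); rewrite mxquadE.
under eq_bigr => k _ do under eq_bigr => j _ do rewrite !mxE !andbT.
rewrite (bigD1 i) //= [X in _ + X]big1 => [|k /negbTE ->]; last first.
  by apply: big1 => j _; rewrite mul0r mulr0.
rewrite addr0 (bigD1 i) //= [X in _ + X]big1 => [|j /negbTE ->]; last first.
  by rewrite !mulr0.
by rewrite addr0 eqxx !mulr1.
Qed.

Section rayleigh.
Context (R : realType) (n : nat) (U : 'M[R]_n).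
Implicit Types x : n.-tuple R.

Definition qform x : R := ((\col_i tnth x i)^T *m U *m \col_i tnth x i) 0 0.

Definition rayleigh x : R := qform x / sqnorm x.

Lemma rayleighE x : rayleigh x = \sum_i \sum_j U i j * proj_entry i j x.
Proof.
rewrite /rayleigh /qform mxquadE mulr_suml; apply: eq_bigr => i _.
by rewrite mulr_suml; apply: eq_bigr => j _; rewrite !mxE -mulrA.
Qed.

Lemma measurable_rayleigh : measurable_fun setT rayleigh.
Proof.
rewrite (_ : rayleigh = fun x => \sum_i \sum_j U i j * proj_entry i j x).
  apply: measurable_sum => i; apply: measurable_sum => j.
  by apply: measurable_funM => //; apply: measurable_proj_entry.
by apply/funext => x; rewrite rayleighE.
Qed.

Lemma bounded_rayleigh : [bounded rayleigh x | x in setT].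
Proof.
exists (\sum_i \sum_j `|U i j|); split; first exact: num_real.
move=> M M_gt x _.
apply: le_trans (ltW M_gt); rewrite rayleighE.
apply: le_trans (ler_norm_sum _ _ _) (ler_sum _ _) => i _.
apply: le_trans (ler_norm_sum _ _ _) (ler_sum _ _) => j _.
by rewrite normrM ler_piMr // proj_entry_le1.
Qed.

Lemma rayleigh_ge0 x : psd U -> 0 <= rayleigh x.
Proof. by move=> [_ U_ge0]; rewrite divr_ge0 ?sqnorm_ge0 ?U_ge0. Qed.

Lemma lt_rayleigh (delta : R) x : 0 < delta ->
  (delta * sqnorm x < qform x) = (delta < rayleigh x).
Proof.
move=> delta_gt0; have [s0|s_neq0] := eqVneq (sqnorm x) 0.
  have x0 i : tnth x i = 0 by apply: sqnorm_eq0.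
  have q0 : qform x = 0.
    rewrite /qform mxquadE big1 // => i _; rewrite big1 // => j _.
    by rewrite !mxE !x0 mul0r mulr0.
  by rewrite /rayleigh s0 q0 mulr0 mul0r ltxx ltNge (ltW delta_gt0).
have s_gt0 : 0 < sqnorm x by rewrite lt_def s_neq0 sqnorm_ge0.
by rewrite /rayleigh ltr_pdivlMr // mulrC.
Qed.

End rayleigh.

Lemma qform_tuple_rv d (Omega : measurableType d) (R : realType) n
    (U : 'M[R]_n) (w : 'I_n -> Omega -> R) t :
  qform U (tuple_rv w t) = ((rvec w t)^T *m U *m rvec w t) 0 0.
Proof.
rewrite /qform; suff -> : \col_i tnth (tuple_rv w t) i = rvec w t by [].
by apply/matrixP => i j; rewrite !mxE tnth_mktuple.
Qed.

Lemma sqnorm_tuple_rv d (Omega : measurableType d) (R : realType) n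
    (w : 'I_n -> Omega -> R) t :
  sqnorm (tuple_rv w t) = \sum_i w i t ^+ 2.
Proof. by apply: eq_bigr => i _; rewrite tnth_mktuple. Qed.

Lemma symmetric_distr_sign (R : realType) (Pw : probability R R) (c : R)
    (A : set R) :
  symmetric_distr Pw -> c = 1 \/ c = -1 -> measurable A ->
  Pw [set x | A (c * x)] = Pw A.
Proof.
move=> Pw_sym [->|->] mA.
  by congr (Pw _); apply/seteqP; split => x /=; rewrite mul1r.
rewrite [RHS]Pw_sym //; congr (Pw _); apply/seteqP; split => x /=; rewrite mulN1r.
  by move=> Ax; exists (- x); rewrite ?opprK.
by move=> [y Ay <-]; rewrite opprK.
Qed.

Section iid_symmetric.
Context d (Omega : measurableType d) (R : realType) (P : probability Omega R).
Context (Pw : probability R R) (n : nat) (w : 'I_n -> Omega -> R).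
Hypothesis Pw_sym : symmetric_distr Pw.
Hypothesis mw : forall i, measurable_fun setT (w i).
Hypothesis w_law : forall i, has_law P (w i) Pw.
Hypothesis w_indep : mutually_independent P w.

Let X := tuple_rv w.
Let mX : measurable_fun setT X := measurable_tuple_rv mw.

Lemma iid_box_law (A : 'I_n -> set R) : (forall i, measurable (A i)) ->
  P (X @^-1` box A) = (\prod_(i < n) Pw (A i))%E.
Proof.
move=> mA; rewrite tuple_rv_preimage_box w_indep //.
by apply: eq_bigr => i _; apply: w_law.
Qed.

Lemma sign_perm_box_law (e : 'I_n -> R) (p : {perm 'I_n}) (A : 'I_n -> set R) :
  (forall i, e i = 1 \/ e i = -1) -> (forall i, measurable (A i)) ->
  P ((sign_perm e p \o X) @^-1` box A) = P (X @^-1` box A).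
Proof.
move=> e_sign mA.
have mB j : measurable [set y | A ((p^-1)%g j) (e ((p^-1)%g j) * y)].
  rewrite -[X in measurable X]setTI.
  by apply: (mulrl_measurable (D := setT)) => //; apply: mA.
rewrite comp_preimage sign_perm_preimage_box !iid_box_law //.
rewrite (reindex_inj (@perm_inj _ p)) /=.
by apply: eq_bigr => i _; rewrite permK symmetric_distr_sign.
Qed.

Lemma integral_sign_perm (e : 'I_n -> R) (p : {perm 'I_n}) (g : n.-tuple R -> R) :
  (forall i, e i = 1 \/ e i = -1) ->
  measurable_fun setT g -> [bounded g x | x in setT] ->
  \int[P]_t g (sign_perm e p (X t)) = \int[P]_t g (X t).
Proof.
move=> e_sign mg bg; congr fine.
apply: (integral_eq_on_boxes (X := sign_perm e p \o X)) => //.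
  exact: measurableT_comp (measurable_sign_perm _ _) mX.
by move=> A mA; apply: sign_perm_box_law.
Qed.

Lemma integrable_proj_entry i j :
  P.-integrable setT (EFin \o (proj_entry i j \o X)).
Proof.
by apply: integrable_bounded_comp => //; [apply: measurable_proj_entry|
  apply: bounded_proj_entry].
Qed.

Lemma Rintegral_proj_entry_offdiag i j :
  i != j -> \int[P]_t proj_entry i j (X t) = 0.
Proof.
move=> ij; pose e k : R := if k == i then -1 else 1.
have e_sign k : e k = 1 \/ e k = -1 by rewrite /e; case: eqP; [right|left].
have flip x : proj_entry i j (sign_perm e 1 x) = -1 * proj_entry i j x.
  by rewrite proj_entry_sign_perm // !perm1 /e eqxx eq_sym (negbTE ij) mulr1.
have := integral_sign_perm 1 e_sign (measurable_proj_entry i j)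
  (bounded_proj_entry R i j).
under eq_Rintegral do rewrite flip.
by rewrite RintegralZl //; [lra|apply: integrable_proj_entry].
Qed.

Lemma Rintegral_proj_entry_diag i j :
  \int[P]_t proj_entry i i (X t) = \int[P]_t proj_entry j j (X t).
Proof.
have one_sign (k : 'I_n) : (1 : R) = 1 \/ (1 : R) = -1 by left.
rewrite -[RHS](integral_sign_perm (tperm i j) one_sign (measurable_proj_entry j j)
  (bounded_proj_entry R j j)).
by apply: eq_Rintegral => t _; rewrite proj_entry_sign_perm // tpermR !mul1r.
Qed.

Lemma Rintegral_proj_entry_diag_le i : \int[P]_t proj_entry i i (X t) <= n%:R^-1.
Proof.
have n_gt0 : (0 < n)%N by apply: leq_ltn_trans (ltn_ord i).
have : \sum_(j < n) \int[P]_t proj_entry j j (X t) <= 1.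
  rewrite -Rintegral_sum //; last by move=> j; apply: integrable_proj_entry.
  apply: le_trans (_ : \int[P]_(t in setT) 1 <= 1).
    apply: le_Rintegral => //; last by move=> t _; apply: sum_proj_entry_le1.
      by apply: integrable_Rsum => // j; apply: integrable_proj_entry.
    exact: finite_measure_integrable_cst.
  rewrite (Rintegral_cst P) // mul1r; change (fine (P setT) <= 1).
  by rewrite probability_setT.
under eq_bigr do rewrite (Rintegral_proj_entry_diag _ i).
rewrite sumr_const card_ord => h.
have n_pos : 0 < n%:R :> R by rewrite ltr0n.
by rewrite -(ler_pM2l n_pos) mulfV ?gt_eqF // mulr_natl.
Qed.

Lemma Rintegral_rayleigh_le (U : 'M[R]_n) :
  psd U -> \int[P]_t rayleigh U (X t) <= \tr U / n%:R.
Proof.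
move=> psdU; have -> : \int[P]_t rayleigh U (X t) =
    \sum_i U i i * \int[P]_t proj_entry i i (X t).
  under eq_Rintegral do rewrite rayleighE pair_bigA.
  rewrite Rintegral_sumZ //; last by move=> [i j]; apply: integrable_proj_entry.
  rewrite -(pair_bigA _ (fun i j => U i j * \int[P]_t proj_entry i j (X t))) /=.
  apply: eq_bigr => i _; rewrite (bigD1 i) //= big1 ?addr0 // => j ji.
  by rewrite Rintegral_proj_entry_offdiag ?mulr0 // eq_sym.
rewrite /mxtrace mulr_suml; apply: ler_sum => i _.
by rewrite ler_wpM2l ?psd_diag_ge0 ?Rintegral_proj_entry_diag_le.
Qed.

End iid_symmetric.

Theorem lemma4 (R : realType) (d : measure_display) (T : measurableType d)
  (P : probability T R) (Pw : probability R R) (n : nat) (U : 'M[R]_n)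
  (w : 'I_n -> T -> R) (delta : R) :
  (0 < n)%N ->
  symmetric_distr Pw ->
  psd U ->
  (forall i, measurable_fun setT (w i)) ->
  (forall i, has_law P (w i) Pw) ->
  mutually_independent P w ->
  0 < delta ->
  (P [set t | (delta * (\sum_(i < n) w i t ^+ 2) <
              ((rvec w t)^T *m U *m rvec w t) 0 0)%R]
     <= (\tr U / (delta * n%:R))%:E)%E.
Proof.
move=> _ Pw_sym psdU mw w_law w_indep delta_gt0.
under eq_set => t do rewrite -qform_tuple_rv -sqnorm_tuple_rv lt_rayleigh //.
have int_rayleigh : P.-integrable setT (EFin \o (rayleigh U \o tuple_rv w)).
  exact: integrable_bounded_comp (measurable_tuple_rv mw) (measurable_rayleigh U)
    (bounded_rayleigh U).
rewrite invfM mulrCA EFinM lee_pdivlMl //.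
have rayleigh_ge0_w t : 0 <= rayleigh U (tuple_rv w t) by apply: rayleigh_ge0.
apply: le_trans (markov_lt delta_gt0 int_rayleigh rayleigh_ge0_w) _.
by rewrite lee_fin (Rintegral_rayleigh_le Pw_sym mw w_law w_indep).
Qed.
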